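(* Consider the gGASP instance with players $N=\{1,2,3\}$, non-void activities $A^*=\{a,b,c\}$, links $L=\{\{1,2\},\{2,3\}\}$ (a path), and preferences (listing only approved alternatives and $(a_\emptyset,1)$; all unlisted alternatives are ranked strictly below $(a_\emptyset,1)$): player 1: $(b,2)\succ(a,1)\succ(c,3)\succ(c,2)\succ(c,1)\succ(a_\emptyset,1)$; player 2: $(c,3)\succ(c,2)\succ(a,2)\succ(b,2)\succ(b,1)\succ(a_\emptyset,1)$; player 3: $(c,3)\succ(a,2)\succ(a,1)\succ(a_\emptyset,1)$. Then this instance admits no individually stable feasible assignment.
   Context: In a gGASP instance with players $N=[n]$, activities $A=A^*\cup\{a_\emptyset\}$ ($a_\emptyset$ the void activity), preferences $\succeq_i$ over $X=(A^*\times[n])\cup\{(a_\emptyset,1)\}$ and links $L$: a feasible assignment is a map $\pi:N\to A$ such that each $\pi^a=\{i:\pi(i)=a\}$, $a\in A^*$, is connected in $(N,L)$ (empty allowed). $\pi_i=\pi^{\pi(i)}$ if $\pi(i)\neq a_\emptyset$, else $\pi_i=\{i\}$. $\pi$ is individually rational if $(\pi(i),|\pi_i|)\succeq_i(a_\emptyset,1)$ for all $i$. Player $i$ has an NS-deviation to $a\in A^*\setminus\{\pi(i)\}$ if $\pi^a\cup\{i\}$ is connected and $(a,|\pi^a|+1)\succ_i(\pi(i),|\pi_i|)$; it is an IS-deviation if moreover $(a,|\pi^a|+1)\succeq_j(a,|\pi^a|)$ for all $j\in\pi^a$. $\pi$ is individually stable if it is individually rational and no player has an IS-deviation. *)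

From mathcomp Require Import all_boot.
Set Implicit Arguments. Unset Strict Implicit. Unset Printing Implicit Defensive.

(* Players: 'I_n (player k+1 of the paper is the ordinal k).
   Non-void activities: a finType A; an activity is [option A], None = a_void.
   Alternatives: [option (A * nat)], None = (a_void, 1), Some (a, k) = (a, k).
   The genuine alternative set X is given by [inX]. *)

Definition alt (A : Type) := option (A * nat).

Definition inX (n : nat) (A : Type) (x : alt A) : bool :=
  if x is Some (_, k) then (0 < k <= n) else true.

Definition strict (T : Type) (R : rel T) : rel T := fun x y => R x y && ~~ R y x.

Definition weak_order_on (n : nat) (A : Type) (R : rel (alt A)) : Prop :=
  (forall x y, inX n x -> inX n y -> R x y || R y x) /\
  (forall x y z, inX n x -> inX n y -> inX n z -> R x y -> R y z -> R x z).

(* a set S of players is connected in the graph (N, L) (empty set allowed) *)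
Definition connected_in (n : nat) (L : rel 'I_n) (S : {set 'I_n}) : bool :=
  [forall x in S, forall y in S,
     connect (fun u v => [&& L u v, u \in S & v \in S]) x y].

Section GASP.
Variables (n : nat) (A : finType).
Implicit Types (pi : 'I_n -> option A) (L : rel 'I_n)
               (pref : 'I_n -> rel (alt A)).

Definition coalition pi (a : A) : {set 'I_n} := [set i | pi i == Some a].

Definition coal_of pi (i : 'I_n) : {set 'I_n} :=
  if pi i is Some a then coalition pi a else [set i].

Definition cur_alt pi (i : 'I_n) : alt A :=
  if pi i is Some a then Some (a, #|coalition pi a|) else None.

Definition feasible L pi : Prop := forall a : A, connected_in L (coalition pi a).

Definition indiv_rational pref pi : Prop :=
  forall i, pref i (cur_alt pi i) None.

Definition NS_deviation L pref pi (i : 'I_n) (a : A) : Prop :=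
  [/\ pi i != Some a,
      connected_in L (i |: coalition pi a) &
      strict (pref i) (Some (a, #|coalition pi a|.+1)) (cur_alt pi i)].

Definition IS_deviation L pref pi (i : 'I_n) (a : A) : Prop :=
  NS_deviation L pref pi i a /\
  (forall j, j \in coalition pi a ->
     pref j (Some (a, #|coalition pi a|.+1)) (Some (a, #|coalition pi a|))).

Definition indiv_stable L pref pi : Prop :=
  indiv_rational pref pi /\ (forall i a, ~ IS_deviation L pref pi i a).

(* The preference of player i is a weak order on X in which the listed
   alternatives [l] (best first, ending with (a_void,1) = None) are strictly
   decreasing, and every unlisted alternative of X is strictly below None. *)
Definition pref_matches (R : rel (alt A)) (l : seq (alt A)) : Prop :=
  [/\ weak_order_on n R,
      sorted (strict R) (rcons l None) &
      forall x, inX n x -> x \notin rcons l None -> strict R None x].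
End GASP.

(* activities a, b, c are the ordinals 0, 1, 2 of 'I_3 *)
Definition act_a : 'I_3 := @Ordinal 3 0 isT.
Definition act_b : 'I_3 := @Ordinal 3 1 isT.
Definition act_c : 'I_3 := @Ordinal 3 2 isT.

(* links {1,2}, {2,3}: players 1,2,3 are ordinals 0,1,2 *)
Definition path_links : rel 'I_3 := fun u v =>
  [|| (nat_of_ord u == 0) && (nat_of_ord v == 1),
      (nat_of_ord u == 1) && (nat_of_ord v == 0),
      (nat_of_ord u == 1) && (nat_of_ord v == 2)
    | (nat_of_ord u == 2) && (nat_of_ord v == 1)].

(* listed approved alternatives, best first (None = (a_void,1) appended) *)
Definition list_of (i : 'I_3) : seq (alt 'I_3) :=
  match nat_of_ord i with
  | 0 => [:: Some (act_b, 2); Some (act_a, 1); Some (act_c, 3);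
             Some (act_c, 2); Some (act_c, 1)]
  | 1 => [:: Some (act_c, 3); Some (act_c, 2); Some (act_a, 2);
             Some (act_b, 2); Some (act_b, 1)]
  | _ => [:: Some (act_c, 3); Some (act_a, 2); Some (act_a, 1)]
  end.

From mathcomp Require Import all_boot.
From Stdlib Require Import FunctionalExtensionality.

(* The instance is finite: an assignment is given by the activities of the
   three players, and for each of the 4^3 assignments some connectivity
   requirement, participation constraint or IS-deviation fails.  Such a
   failure can be certified using only the positions of alternatives in the
   listed orders, because a weak order in which the listed alternatives
   decrease strictly and all unlisted ones lie below (a_void, 1) ranks every
   listed alternative strictly above all later and all unlisted ones.  The
   search over the 64 assignments is then a computation. *)

Lemma weak_order_strict_trans n (A : finType) (R : rel (alt A)) x y z :
  weak_order_on n R -> inX n x -> inX n y -> inX n z ->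
  strict R x y -> strict R y z -> strict R x z.
Proof.
case=> _ R_trans Xx Xy Xz /andP[Rxy nRyx] /andP[Ryz nRzy].
apply/andP; split; first exact: (R_trans x y z).
by apply: contra nRzy => Rzx; apply: (R_trans z x y).
Qed.

Section ListedPreferences.
Variables (n : nat) (A : finType) (R : rel (alt A)) (l : seq (alt A)).
Hypotheses (HR : pref_matches n R l) (l_inX : all (@inX n A) l) (l_void : None \notin l).

Lemma pref_matches_index_strict x y : inX n x -> inX n y ->
  index x (rcons l None) < index y (rcons l None) -> strict R x y.
Proof.
move=> Xx Xy lt_xy; case: HR => [R_weak sorted_l below_void].
have X_l : all (@inX n A) (rcons l None) by rewrite all_rcons l_inX.
have sorted_index : {in rcons l None &, forall u v,
    index u (rcons l None) < index v (rcons l None) -> strict R u v}.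
  apply: sorted_ltn_index_in => // v u w Xu Xv Xw.
  by apply: weak_order_strict_trans R_weak _ _ _; apply: (allP X_l).
have x_l : x \in rcons l None by rewrite -index_mem (leq_trans lt_xy) ?index_size.
have [y_l | y_nl] := boolP (y \in rcons l None); first exact: sorted_index.
have void_y : strict R None y by exact: below_void.
have [-> // | x_nvoid] := eqVneq x None.
apply: (@weak_order_strict_trans n A R x None y R_weak Xx isT Xy _ void_y).
apply: sorted_index => //.
  by rewrite mem_rcons inE.
move: x_l; rewrite mem_rcons inE (negbTE x_nvoid) /= => x_l.
by rewrite -cats1 !index_cat x_l (negbTE l_void) /= ?eqxx ?addn0 index_mem.
Qed.

End ListedPreferences.

(* [enum], membership and cardinality of [{set _}] are locked and do not
   reduce under [vm_compute]; the search below works with explicit lists. *)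
Definition ord3_0 : 'I_3 := @Ordinal 3 0 isT.
Definition ord3_1 : 'I_3 := @Ordinal 3 1 isT.
Definition ord3_2 : 'I_3 := @Ordinal 3 2 isT.
Definition ord3_enum : seq 'I_3 := [:: ord3_0; ord3_1; ord3_2].

Lemma ord3P (i : 'I_3) : [\/ i = ord3_0, i = ord3_1 | i = ord3_2].
Proof.
by case: i => [[|[|[|//]]] lt_i3]; [constructor 1|constructor 2|constructor 3];
  apply: val_inj.
Qed.

Lemma mem_ord3_enum (i : 'I_3) : i \in ord3_enum.
Proof. by case: (ord3P i) => ->. Qed.

Lemma card_ord3 (P : pred 'I_3) : #|P| = count P ord3_enum.
Proof.
rewrite cardE /enum_mem size_filter; apply/permP/uniq_perm => //.
  by rewrite -enumT enum_uniq.
by move=> i; rewrite -enumT mem_enum mem_ord3_enum.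
Qed.

Definition gap_free (S : pred 'I_3) : bool := ~~ [&& S ord3_0, S ord3_2 & ~~ S ord3_1].

Lemma connected_in_path_links (S : {set 'I_3}) :
  connected_in path_links S = gap_free (fun j => j \in S).
Proof.
rewrite /gap_free; apply/idP/idP.
- move=> /forallP S_conn; apply/negP => /and3P[S0 S2 S1].
  have /connectP[[|j p] /=] := implyP (forallP (implyP (S_conn ord3_0) S0) ord3_2) S2.
    by move=> _ /(congr1 val).
  move=> /andP[/and3P[link_0j _ Sj] _] _.
  have j1 : j = ord3_1 by case: (ord3P j) link_0j => ->.
  by move: S1; rewrite -j1 Sj.
- move=> no_gap; apply/forallP => x; apply/implyP => Sx.
  apply/forallP => y; apply/implyP => Sy.
  set e := fun u v => [&& path_links u v, u \in S & v \in S].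
  have link u v : u \in S -> v \in S -> path_links u v -> connect e u v.
    by move=> Su Sv uv; apply: connect1; rewrite /e uv Su Sv.
  have S1 : ord3_0 \in S -> ord3_2 \in S -> ord3_1 \in S.
    by move=> S0 S2; move: no_gap; rewrite S0 S2 /= negbK.
  case: (ord3P x) Sx => -> Sx; case: (ord3P y) Sy => -> Sy;
    try exact: connect0; try exact: link.
  + exact: connect_trans (link _ _ Sx (S1 Sx Sy) isT) (link _ _ (S1 Sx Sy) Sy isT).
  + exact: connect_trans (link _ _ Sx (S1 Sy Sx) isT) (link _ _ (S1 Sy Sx) Sy isT).
Qed.

Definition rank_of (i : 'I_3) (x : alt 'I_3) : nat := index x (rcons (list_of i) None).

Definition prefers (i : 'I_3) (x y : alt 'I_3) : bool :=
  [&& inX 3 x, inX 3 y & rank_of i x < rank_of i y].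

Section Assignment.
Variable pi : 'I_3 -> option 'I_3.

Definition coalition_size (a : 'I_3) : nat := count (fun j => pi j == Some a) ord3_enum.

Lemma card_coalition a : #|coalition pi a| = coalition_size a.
Proof. by rewrite cardsE card_ord3. Qed.

Definition assigned_alt (i : 'I_3) : alt 'I_3 :=
  if pi i is Some a then Some (a, coalition_size a) else None.

Lemma cur_altE i : cur_alt pi i = assigned_alt i.
Proof. by rewrite /cur_alt /assigned_alt; case: (pi i) => // a; rewrite card_coalition. Qed.

Definition IS_deviationb (i a : 'I_3) : bool :=
  let joined := Some (a, (coalition_size a).+1) in
  [&& pi i != Some a, gap_free (fun j => (j == i) || (pi j == Some a)),
      prefers i joined (assigned_alt i) &
      all (fun j => (pi j == Some a) ==> prefers j joined (Some (a, coalition_size a)))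
          ord3_enum].

Definition unstable : bool :=
  [|| has (fun a => ~~ gap_free (fun j => pi j == Some a)) ord3_enum,
      has (fun i => prefers i None (assigned_alt i)) ord3_enum |
      has (fun i => has (IS_deviationb i) ord3_enum) ord3_enum].

Variable pref : 'I_3 -> rel (alt 'I_3).
Hypothesis Hpref : forall i, pref_matches 3 (pref i) (list_of i).

Lemma prefers_strict i x y : prefers i x y -> strict (pref i) x y.
Proof.
move=> /and3P[Xx Xy lt_xy].
have /andP[l_inX l_void] : all (@inX 3 _) (list_of i) && (None \notin list_of i).
  by case: (ord3P i) => ->.
exact: pref_matches_index_strict.
Qed.

Lemma IS_deviationbP i a : IS_deviationb i a -> IS_deviation path_links pref pi i a.
Proof.
case/and4P=> pi_i_a join_conn join_pref /allP members_agree; split; first split.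
- exact: pi_i_a.
- by rewrite connected_in_path_links /gap_free !inE.
- by rewrite cur_altE card_coalition; apply: prefers_strict.
- move=> j; rewrite inE card_coalition => pi_j_a.
  have /prefers_strict/andP[] // := implyP (members_agree j (mem_ord3_enum j)) pi_j_a.
Qed.

Lemma unstable_not_stable :
  unstable -> ~ (feasible path_links pi /\ indiv_stable path_links pref pi).
Proof.
move=> /or3P[] witness [pi_feas [pi_IR pi_IS]].
- case/hasP: witness => a _; move: (pi_feas a).
  by rewrite connected_in_path_links /gap_free !inE => ->.
- case/hasP: witness => i _ /prefers_strict/andP[_].
  by rewrite -cur_altE pi_IR.
- case/hasP: witness => i _ /hasP[a _ /IS_deviationbP].
  exact: pi_IS.
Qed.

End Assignment.

Definition assignment3 (x y z : option 'I_3) (i : 'I_3) : option 'I_3 :=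
  match val i with 0 => x | 1 => y | _ => z end.

Definition activities3 : seq (option 'I_3) := None :: map Some ord3_enum.

Lemma mem_activities3 (o : option 'I_3) : o \in activities3.
Proof. by case: o => [a|] //; case: (ord3P a) => ->. Qed.

Lemma all_assignments_unstable :
  all (fun x => all (fun y => all (fun z => unstable (assignment3 x y z))
         activities3) activities3) activities3.
Proof. by vm_compute. Qed.

Theorem mainTheorem4 (pref : 'I_3 -> rel (alt 'I_3)) :
  (forall i : 'I_3, pref_matches 3 (pref i) (list_of i)) ->
  ~ exists pi : 'I_3 -> option 'I_3,
      feasible path_links pi /\ indiv_stable path_links pref pi.
Proof.
move=> Hpref [pi pi_stable].
have pi_triple : pi = assignment3 (pi ord3_0) (pi ord3_1) (pi ord3_2).
  by apply: functional_extensionality => i; case: (ord3P i) => ->.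
apply: (unstable_not_stable pi pref Hpref _ pi_stable); rewrite pi_triple.
move: all_assignments_unstable.
by move=> /allP/(_ _ (mem_activities3 _))/allP/(_ _ (mem_activities3 _))
          /allP/(_ _ (mem_activities3 _)).
Qed.
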